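(* Let $K_n(\lambda)$ be defined by $K_0=2$, $K_1=1$, $K_2=\lambda-2$, $K_3=\lambda-3$, $K_{2p+1}=(\lambda-2)K_{2p-1}-K_{2p-3}$ and $K_{2p}=(\lambda-2)K_{2p-2}-K_{2p-4}$ ($p\ge2$), and let $q(\lambda)=\lambda^2-4\lambda$. Then for $p\ge0$: $$K_{2p}(\lambda)=\frac{1}{2^{p-1}}\sum_{i=0}^{\lfloor p/2\rfloor}\binom{p}{2i}(\lambda-2)^{p-2i}q(\lambda)^i,$$ $$K_{2p+1}(\lambda)=\frac{1}{2^{p}}\sum_{i=0}^{\lfloor p/2\rfloor}\binom{p}{2i}(\lambda-2)^{p-2i}q(\lambda)^i+\frac{\lambda-4}{2^{p}}\sum_{i=0}^{\lfloor (p-1)/2\rfloor}\binom{p}{2i+1}(\lambda-2)^{p-2i-1}q(\lambda)^i.$$ *)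

From mathcomp Require Import all_boot all_order all_algebra.
Set Implicit Arguments. Unset Strict Implicit. Unset Printing Implicit Defensive.
Import Order.TTheory GRing.Theory Num.Theory.
Local Open Scope ring_scope.

Fixpoint Kseq (R : nzRingType) (lam : R) (n : nat) : R :=
  match n with
  | 0 => 2
  | 1 => 1
  | 2 => lam - 2
  | 3 => lam - 3
  | S (S ((S (S m)) as m2)) => (lam - 2) * Kseq lam m2 - Kseq lam m
  end.

Definition qpol (R : nzRingType) (lam : R) : R := lam ^+ 2 - 4 * lam.

From mathcomp Require Import all_boot all_order all_algebra.
From mathcomp Require Import ring.
Set Implicit Arguments. Unset Strict Implicit. Unset Printing Implicit Defensive.
Import Order.TTheory GRing.Theory Num.Theory.
Local Open Scope ring_scope.

(* Put x = lam - 2, so that q = x^2 - 4.  The two sums of the statement are the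
   parts E_p and O_p of (x + sqrt q)^p = E_p + O_p sqrt q, hence satisfy
   E_{p+1} = x E_p + q O_p and O_{p+1} = x O_p + E_p, and both solve
   u_{p+2} = 2x u_{p+1} - (x^2 - q) u_p = 2x u_{p+1} - 4 u_p.  After scaling by
   2^-p this is the recurrence K_{n+4} = x K_{n+2} - K_n, so it suffices to
   compare the first four values. *)

Lemma sum_nat_even_odd (V : nmodType) (F : nat -> V) n :
  \sum_(0 <= k < n) F k =
  \sum_(0 <= i < n.+1 %/ 2) F i.*2 + \sum_(0 <= i < n %/ 2) F i.*2.+1.
Proof.
elim: n => [|n IH]; first by rewrite !big_geq ?addr0.
rewrite big_nat_recr //= {}IH -(odd_double_half n) !divn2.
case: (odd n) (n./2) => m /=; rewrite ?add0n ?add1n /= ?uphalf_double ?doubleK.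
  by rewrite [X in _ = _ + X]big_nat_recr //= addrA.
by rewrite [X in _ = X + _]big_nat_recr //= addrAC.
Qed.

Section BinomialParts.
Variables (R : comNzRingType) (x q : R).

(* [even_pow k] and [odd_pow k] are the rational and irrational parts of
   sqrt q ^ k. *)
Definition even_pow (k : nat) : R := if odd k then 0 else q ^+ k./2.
Definition odd_pow (k : nat) : R := if odd k then q ^+ k./2 else 0.

Lemma even_powS k : even_pow k.+1 = q * odd_pow k.
Proof.
by rewrite /even_pow /odd_pow /= uphalf_half; case: (odd k); rewrite ?mulr0 -?exprS.
Qed.

Lemma odd_powS k : odd_pow k.+1 = even_pow k.
Proof. by rewrite /even_pow /odd_pow /= uphalf_half; case: (odd k). Qed.

Definition binom_sum (h : nat -> R) (p : nat) : R :=
  \sum_(0 <= k < p.+1) 'C(p, k)%:R * x ^+ (p - k) * h k.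

Lemma binom_sumS (h h' : nat -> R) (c : R) :
    (forall k, h k.+1 = c * h' k) ->
  forall p, binom_sum h p.+1 = x * binom_sum h p + c * binom_sum h' p.
Proof.
move=> hS p; rewrite /binom_sum big_nat_recl // bin0 subn0.
under eq_big_nat => k _ do rewrite binS subSS natrD !mulrDl.
rewrite big_split /= big_nat_recr //= bin_small // !mul0r addr0.
rewrite !big_distrr /= [in RHS]big_nat_recl //= bin0 subn0 addrA !mul1r exprS -mulrA.
congr (_ + _ + _); apply: eq_big_nat => k /andP[_ ltkp].
  by rewrite mulrCA !mulrA -(mulrA _ _ x) -exprSr subnSK.
by rewrite hS mulrCA.
Qed.

Definition even_part := binom_sum even_pow.
Definition odd_part := binom_sum odd_pow.

Lemma even_partS p : even_part p.+1 = x * even_part p + q * odd_part p.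
Proof. by rewrite /even_part /odd_part (binom_sumS even_powS). Qed.

Lemma odd_partS p : odd_part p.+1 = x * odd_part p + even_part p.
Proof.
rewrite /odd_part (binom_sumS (h' := even_pow) (c := 1)) ?mul1r // => k.
by rewrite odd_powS mul1r.
Qed.

Lemma even_partSS p :
  even_part p.+2 = 2 * x * even_part p.+1 - (x ^+ 2 - q) * even_part p.
Proof. by rewrite !even_partS !odd_partS; ring. Qed.

Lemma odd_partSS p :
  odd_part p.+2 = 2 * x * odd_part p.+1 - (x ^+ 2 - q) * odd_part p.
Proof. by rewrite !odd_partS !even_partS; ring. Qed.

Lemma even_partE p : even_part p =
  \sum_(0 <= i < (p %/ 2).+1) 'C(p, 2 * i)%:R * x ^+ (p - 2 * i) * q ^+ i.
Proof.
rewrite /even_part /binom_sum sum_nat_even_odd [X in _ + X]big1 ?addr0 => [|i _].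
  rewrite !divn2; apply: eq_big_nat => i _.
  by rewrite /even_pow mul2n odd_double doubleK.
by rewrite /even_pow /= odd_double mulr0.
Qed.

Lemma odd_partE p : odd_part p =
  \sum_(0 <= i < p.+1 %/ 2) 'C(p, 2 * i + 1)%:R * x ^+ (p - 2 * i - 1) * q ^+ i.
Proof.
rewrite /odd_part /binom_sum sum_nat_even_odd.
rewrite [X in X + _]big1 ?add0r => [|i _]; last by rewrite /odd_pow odd_double mulr0.
apply: eq_big_nat => i _.
by rewrite /odd_pow mul2n addn1 subnS subn1 /= odd_double uphalf_double.
Qed.

End BinomialParts.

Lemma Kseq_SSSS (R : nzRingType) (lam : R) n :
  Kseq lam n.+4 = (lam - 2) * Kseq lam n.+2 - Kseq lam n.
Proof. by []. Qed.

Section KseqBinomial.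
Variables (R : comNzRingType) (lam : R).

Local Notation E := (even_part (lam - 2) (qpol lam)).
Local Notation O := (odd_part (lam - 2) (qpol lam)).

Lemma sqr_sub2_sub_qpol : (lam - 2) ^+ 2 - qpol lam = 4.
Proof. by rewrite /qpol; ring. Qed.

Lemma Kseq_binom_parts p :
  2 ^+ p * Kseq lam p.*2 = 2 * E p /\
  2 ^+ p * Kseq lam p.*2.+1 = E p + (lam - 4) * O p.
Proof.
pose P k := 2 ^+ k * Kseq lam k.*2 = 2 * E k /\
             2 ^+ k * Kseq lam k.*2.+1 = E k + (lam - 4) * O k.
suff [] : P p /\ P p.+1 by [].
have E0 : E 0 = 1 by rewrite /even_part /binom_sum big_nat1 mulr1 mul1r.
have O0 : O 0 = 0 by rewrite /odd_part /binom_sum big_nat1 mulr0.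
rewrite /P; elim: p => [|p [[Ke Ko] [Ke1 Ko1]]].
  by rewrite even_partS odd_partS E0 O0 /=; split; split; ring.
rewrite !doubleS in Ke1 Ko1 *; split; first by split.
have step a b : 2 ^+ p.+2 * ((lam - 2) * a - b) =
                2 * (lam - 2) * (2 ^+ p.+1 * a) - 4 * (2 ^+ p * b).
  by rewrite !exprS; ring.
rewrite !Kseq_SSSS !step Ke Ke1 Ko Ko1.
by rewrite even_partSS odd_partSS sqr_sub2_sub_qpol; split; ring.
Qed.

End KseqBinomial.

Theorem lemma6 (R : realFieldType) (lam : R) (p : nat) :
  Kseq lam p.*2 =
    ((2 : R) ^ (p%:Z - 1))^-1 *
      \sum_(0 <= i < (p %/ 2).+1)
         'C(p, 2 * i)%:R * (lam - 2) ^+ (p - 2 * i) * qpol lam ^+ i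
  /\
  Kseq lam p.*2.+1 =
    ((2 : R) ^+ p)^-1 *
      \sum_(0 <= i < (p %/ 2).+1)
         'C(p, 2 * i)%:R * (lam - 2) ^+ (p - 2 * i) * qpol lam ^+ i
    + (lam - 4) / (2 : R) ^+ p *
      \sum_(0 <= i < p.+1 %/ 2)
         'C(p, 2 * i + 1)%:R * (lam - 2) ^+ (p - 2 * i - 1) * qpol lam ^+ i.
Proof.
have [Ke Ko] := Kseq_binom_parts lam p.
have two_neq0 : (2 : R) != 0 by rewrite pnatr_eq0.
have pow2_neq0 : (2 : R) ^+ p != 0 by rewrite expf_neq0.
rewrite -even_partE -odd_partE (canRL (mulKf pow2_neq0) Ke) (canRL (mulKf pow2_neq0) Ko).
by rewrite expfzDr // exprN1 -exprnP; split; field.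
Qed.
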